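(* In the setting described in the context, there is a constant $C$ independent of $\epsilon\in(0,1)$ such that for every $t\ge0$, $$\int_{-\pi}^{\pi}\int_{-\pi}^{\pi}|X^\epsilon(x,y,t)|\,dx\,dy\le\int_{-\pi}^{\pi}\int_{-\pi}^{\pi}|\rho_0^\epsilon(x,y)|\,dx\,dy\le C.$$
   Context: Let $\mathcal{C}_b(\mathbb{R}^2)$ be the Banach space of bounded continuous real functions on $\mathbb{R}^2$ with sup norm; for real $u$, $u^+=\max(0,u)$, $u^-=\max(0,-u)$. For $0<\epsilon<1$ let $u^\epsilon,v^\epsilon:\mathbb{R}^2\times[0,\infty)\to\mathbb{R}$ be $2\pi$-periodic in $x$ and in $y$, with $t\mapsto u^\epsilon(\cdot,\cdot,t),v^\epsilon(\cdot,\cdot,t)$ continuous into $\mathcal{C}_b(\mathbb{R}^2)$ and bounded uniformly in $\epsilon,x,y,t$. Let $\rho_0^\epsilon\in\mathcal{C}_b(\mathbb{R}^2)$ be $2\pi$-periodic in each variable with $\sup_\epsilon\int_{[-\pi,\pi]^2}|\rho_0^\epsilon|<\infty$. Let $X^\epsilon$ be the global $\mathcal{C}^1$ solution $[0,\infty)\to\mathcal{C}_b(\mathbb{R}^2)$ of $X^\epsilon(x,y,0)=\rho_0^\epsilon(x,y)$ and $$\frac{d}{dt}X^\epsilon(x,y,t)=\frac1\epsilon\big[(X^\epsilon u^{\epsilon+})(x-\epsilon,y,t)-(X^\epsilon|u^\epsilon|)(x,y,t)+(X^\epsilon u^{\epsilon-})(x+\epsilon,y,t)+(X^\epsilon v^{\epsilon+})(x,y-\epsilon,t)-(X^\epsilon|v^\epsilon|)(x,y,t)+(X^\epsilon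 v^{\epsilon-})(x,y+\epsilon,t)\big].$$ *)

From Stdlib Require Import Reals.
From Coquelicot Require Import Coquelicot.
Open Scope R_scope.

Definition pos (a : R) : R := Rmax 0 a.
Definition neg (a : R) : R := Rmax 0 (- a).

Definition Cb (f : R -> R -> R) : Prop :=
  (exists M, forall x y, Rabs (f x y) <= M) /\
  (forall x y, continuous (fun p : R * R => f (fst p) (snd p)) (x, y)).

Definition periodic2 (f : R -> R -> R) : Prop :=
  forall x y, f (x + 2 * PI) y = f x y /\ f x (y + 2 * PI) = f x y.

Definition Cb_path (F : R -> R -> R -> R) : Prop :=
  forall t, 0 <= t -> Cb (F t).

Definition sup_continuous (F : R -> R -> R -> R) : Prop :=
  forall t, 0 <= t -> forall e, 0 < e -> exists d, 0 < d /\
    forall s, 0 <= s -> Rabs (s - t) < d ->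
      forall x y, Rabs (F s x y - F t x y) <= e.

Definition sup_derivative (F F' : R -> R -> R -> R) : Prop :=
  forall t, 0 <= t -> forall e, 0 < e -> exists d, 0 < d /\
    forall s, 0 <= s -> s <> t -> Rabs (s - t) < d ->
      forall x y, Rabs ((F s x y - F t x y) / (s - t) - F' t x y) <= e.

Definition rhs (eps : R) (X u v : R -> R -> R -> R) (x y t : R) : R :=
  / eps * ( X (x - eps) y t * pos (u (x - eps) y t)
          - X x y t * Rabs (u x y t)
          + X (x + eps) y t * neg (u (x + eps) y t)
          + X x (y - eps) t * pos (v x (y - eps) t)
          - X x y t * Rabs (v x y t)
          + X x (y + eps) t * neg (v x (y + eps) t) ).

Definition dint (f : R -> R -> R) : R :=
  RInt (fun x => RInt (fun y => f x y) (- PI) PI) (- PI) PI.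

From Pilot Require Import Defs.
From Stdlib Require Import Reals Lra Classical.
From Coquelicot Require Import Coquelicot.
Open Scope R_scope.

(* The L1 norm N(t) of X(t) over a period is continuous and does not increase to
   first order in time.  Under the CFL condition h (|u| + |v|) <= eps, one explicit
   Euler step X + h rhs(X) is pointwise bounded by a nonnegative combination of
   |X| at (x, y) and its four eps-neighbours, and the integral of that combination
   equals N(t): the upwind fluxes leaving a point enter its neighbour, and the
   integral over a period is translation invariant.  So every right Dini
   derivative of N is <= 0 and N is nonincreasing.
   Translation invariance needs X(t) to be 2 pi-periodic, which is not assumed:
   the translation defect X(t, x + 2 pi, y) - X(t, x, y) solves the same linear
   scheme with zero initial value, and a Gronwall estimate on its sup norm
   forces it to vanish. *)

Definition continuous_on_nonneg (p : R -> R) : Prop :=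
  forall t, 0 <= t -> forall e, 0 < e -> exists d, 0 < d /\
    forall s, 0 <= s -> Rabs (s - t) < d -> Rabs (p s - p t) < e.

Definition right_dini_nonpos (p : R -> R) : Prop :=
  forall t, 0 <= t -> forall e, 0 < e -> exists d, 0 < d /\
    forall s, t < s < t + d -> p s <= p t + (s - t) * e.

Lemma right_dini_nonpos_le_slope p a b e :
  continuous_on_nonneg p -> right_dini_nonpos p -> 0 <= a -> a <= b -> 0 < e ->
  p b <= p a + e * (b - a).
Proof.
  intros Hc Hd Ha Hab He.
  set (S := fun t => a <= t <= b /\ p t <= p a + e * (t - a)).
  assert (Sa : S a) by (split; [lra | rewrite Rminus_diag, Rmult_0_r; lra]).
  destruct (completeness S (ex_intro _ b (fun t Ht => proj2 (proj1 Ht))) (ex_intro _ a Sa))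
    as [c [Hub Hlub]].
  assert (Hac : a <= c) by now apply Hub.
  assert (Hcb : c <= b) by (apply Hlub; intros t [[_ H] _]; exact H).
  assert (Sc : p c <= p a + e * (c - a)).
  { apply Rnot_lt_le; intro Hgt.
    set (g := p c - (p a + e * (c - a))).
    destruct (Hc c ltac:(lra) (g / 2) ltac:(unfold g; lra)) as [d [Hd0 Hd1]].
    destruct (Req_dec c a) as [-> | Hca].
    { rewrite Rminus_diag, Rmult_0_r in Hgt; lra. }
    set (d' := Rmin d (Rmin (c - a) (g / (2 * e)))).
    assert (Hd'0 : 0 < d').
    { unfold d', g. repeat apply Rmin_glb_lt; try lra. apply Rdiv_lt_0_compat; lra. }
    assert (Hd'd : d' <= d) by apply Rmin_l.
    assert (Hd'g : d' <= g / (2 * e)) by (unfold d'; rewrite Rmin_assoc; apply Rmin_r).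
    assert (Hclose : exists s, S s /\ c - d' < s).
    { apply NNPP; intro Hn.
      enough (c <= c - d') by lra.
      apply Hlub; intros t St; apply Rnot_lt_le; intro Ht; apply Hn; exists t; auto. }
    destruct Hclose as [s [[Hs_ab Hs] Hsc]].
    assert (Hs_c : s <= c) by now apply Hub.
    specialize (Hd1 s ltac:(lra) ltac:(rewrite Rabs_left1; lra)).
    apply Rabs_def2 in Hd1.
    assert (e * (c - s) <= g / 2).
    { apply Rle_trans with (e * (g / (2 * e))); [apply Rmult_le_compat_l; lra |].
      right; field; lra. }
    unfold g in *; nra. }
  destruct (Req_dec c b) as [<- | Hcb']; [exact Sc |].
  destruct (Hd c ltac:(lra) e He) as [d [Hd0 Hd1]].
  set (s := Rmin (c + d / 2) b).
  assert (Hs : c < s <= c + d / 2 /\ s <= b)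
    by (unfold s; repeat split; [apply Rmin_glb_lt | apply Rmin_l | apply Rmin_r]; lra).
  assert (S s) by (split; [lra | specialize (Hd1 s ltac:(lra)); nra]).
  enough (s <= c) by lra.
  now apply Hub.
Qed.

Lemma right_dini_nonpos_nonincreasing p a b :
  continuous_on_nonneg p -> right_dini_nonpos p -> 0 <= a -> a <= b -> p b <= p a.
Proof.
  intros Hc Hd Ha Hab.
  apply Rnot_lt_le; intro Hlt.
  assert (Hba : a < b) by (destruct (Req_dec a b) as [-> |]; lra).
  set (e := (p b - p a) / (2 * (b - a))).
  assert (He : 0 < e) by (unfold e; apply Rdiv_lt_0_compat; lra).
  pose proof (right_dini_nonpos_le_slope p a b e Hc Hd Ha Hab He).
  assert (e * (b - a) = (p b - p a) / 2) by (unfold e; field; lra).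
  lra.
Qed.

Lemma continuity_pt_eps_delta f t : continuity_pt f t ->
  forall e, 0 < e -> exists d, 0 < d /\ forall s, Rabs (s - t) < d -> Rabs (f s - f t) < e.
Proof.
  intros Hc e He. destruct (Hc e He) as [d [Hd H]].
  exists d; split; [lra |]. intros s Hs.
  destruct (Req_dec s t) as [-> | Hne]; [rewrite Rminus_diag, Rabs_R0; lra |].
  apply (H s). repeat split; auto.
Qed.

Lemma continuous_on_nonneg_mult p E :
  continuous_on_nonneg p -> (forall t, continuity_pt E t) ->
  continuous_on_nonneg (fun t => p t * E t).
Proof.
  intros Hp HE t Ht e He.
  set (A := Rabs (p t) + 1). set (B := Rabs (E t) + 1).
  assert (HA : 0 < A) by (unfold A; pose proof (Rabs_pos (p t)); lra).
  assert (HB : 0 < B) by (unfold B; pose proof (Rabs_pos (E t)); lra).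
  destruct (Hp t Ht (e / (2 * B))) as [d1 [Hd1 H1]]; [apply Rdiv_lt_0_compat; lra |].
  destruct (continuity_pt_eps_delta E t (HE t) (Rmin 1 (e / (2 * A)))) as [d2 [Hd2 H2]].
  { apply Rmin_glb_lt; [lra | apply Rdiv_lt_0_compat; lra]. }
  exists (Rmin d1 d2); split; [now apply Rmin_glb_lt |].
  intros s Hs Hst.
  specialize (H1 s Hs (Rlt_le_trans _ _ _ Hst (Rmin_l _ _))).
  specialize (H2 s (Rlt_le_trans _ _ _ Hst (Rmin_r _ _))).
  assert (HEs : Rabs (E s) <= B).
  { pose proof (Rabs_triang_inv (E s) (E t)). pose proof (Rmin_l 1 (e / (2 * A))). unfold B; lra. }
  assert (Hp' : Rabs (p s - p t) * B < e / 2).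
  { apply Rmult_lt_compat_r with (r := B) in H1; [| lra].
    replace (e / (2 * B) * B) with (e / 2) in H1 by (field; lra). exact H1. }
  assert (HE' : A * Rabs (E s - E t) < e / 2).
  { assert (Rabs (E s - E t) < e / (2 * A)) by (eapply Rlt_le_trans; [exact H2 | apply Rmin_r]).
    apply Rmult_lt_compat_l with (r := A) in H; [| lra].
    replace (A * (e / (2 * A))) with (e / 2) in H by (field; lra). exact H. }
  replace (p s * E s - p t * E t) with ((p s - p t) * E s + p t * (E s - E t)) by ring.
  eapply Rle_lt_trans; [apply Rabs_triang |]. rewrite !Rabs_mult.
  pose proof (Rabs_pos (p s - p t)). pose proof (Rabs_pos (E s - E t)).
  assert (Rabs (p t) <= A) by (unfold A; lra).
  nra.
Qed.

Lemma gronwall_zero p K :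
  continuous_on_nonneg p -> (forall t, 0 <= t -> 0 <= p t) -> p 0 = 0 -> 0 <= K ->
  (forall t, 0 <= t -> forall e, 0 < e -> exists d, 0 < d /\
     forall s, t < s < t + d -> p s <= p t * (1 + (s - t) * K) + (s - t) * e) ->
  forall t, 0 <= t -> p t = 0.
Proof.
  intros Hc Hpos Hp0 HK Hgrowth.
  (* The weight [exp (-2 K t)] absorbs the linear growth rate [K]. *)
  set (E := fun s => exp (- (2 * K) * s)).
  assert (HE0 : forall s, 0 < E s) by (intros; apply exp_pos).
  assert (HE1 : forall s, 0 <= s -> E s <= 1).
  { intros s Hs. unfold E. rewrite <- exp_0.
    destruct (Req_dec (- (2 * K) * s) 0) as [-> | Hne]; [lra |].
    left; apply exp_increasing; nra. }
  assert (Hq_dini : right_dini_nonpos (fun s => p s * E s)).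
  { intros t Ht e He. destruct (Hgrowth t Ht e He) as [d [Hd Hstep]].
    exists d; split; [exact Hd |]. intros s Hs. specialize (Hstep s Hs).
    set (h := s - t) in *.
    assert (Hh : 0 < h) by (unfold h; lra).
    assert (Es : E s = E t * exp (- (2 * K) * h)).
    { unfold E, h. rewrite <- exp_plus. f_equal. ring. }
    assert (Hdecay : exp (- (2 * K) * h) * (1 + h * K) <= 1).
    { pose proof (exp_ineq1_le (2 * K * h)).
      assert (Hinv : exp (- (2 * K) * h) * exp (2 * K * h) = 1)
        by (rewrite <- exp_plus, <- exp_0; f_equal; ring).
      pose proof (exp_pos (- (2 * K) * h)).
      rewrite <- Hinv. apply Rmult_le_compat_l; nra. }
    pose proof (HE0 s). pose proof (HE0 t). pose proof (HE1 s ltac:(lra)).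
    pose proof (Hpos t Ht). pose proof (exp_pos (- (2 * K) * h)).
    apply Rle_trans with ((p t * (1 + h * K) + h * e) * E s); [apply Rmult_le_compat_r; lra |].
    assert (h * e * E s <= h * e) by (rewrite <- (Rmult_1_r (h * e)) at 2; apply Rmult_le_compat_l; nra).
    assert (p t * E t * (exp (- (2 * K) * h) * (1 + h * K)) <= p t * E t)
      by (rewrite <- (Rmult_1_r (p t * E t)) at 2; apply Rmult_le_compat_l; nra).
    rewrite Es in *. nra. }
  intros t Ht.
  assert (Hq_cont : continuous_on_nonneg (fun s => p s * E s)).
  { apply continuous_on_nonneg_mult; [exact Hc |]. intros; unfold E; reg. }
  pose proof (right_dini_nonpos_nonincreasing _ 0 t Hq_cont Hq_dini (Rle_refl 0) Ht) as Hq.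
  cbv beta in Hq. rewrite Hp0, Rmult_0_l in Hq.
  pose proof (Hpos t Ht). pose proof (HE0 t). nra.
Qed.

(* [Defs.pos] is qualified because Coquelicot's [pos] is the [posreal] projection. *)
Lemma pos_ge0 a : 0 <= Defs.pos a. Proof. apply Rmax_l. Qed.
Lemma neg_ge0 a : 0 <= Defs.neg a. Proof. apply Rmax_l. Qed.

Lemma pos_add_neg a : Defs.pos a + Defs.neg a = Rabs a.
Proof.
  unfold Defs.pos, Defs.neg, Rmax, Rabs.
  destruct (Rle_dec 0 a), (Rle_dec 0 (- a)), (Rcase_abs a); lra.
Qed.

Lemma pos_le_abs a : Defs.pos a <= Rabs a.
Proof. pose proof (pos_add_neg a); pose proof (neg_ge0 a); lra. Qed.
Lemma neg_le_abs a : Defs.neg a <= Rabs a.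
Proof. pose proof (pos_add_neg a); pose proof (pos_ge0 a); lra. Qed.

Lemma pos_eq a : Defs.pos a = (a + Rabs a) / 2.
Proof. unfold Defs.pos, Rmax, Rabs. destruct (Rle_dec 0 a), (Rcase_abs a); lra. Qed.
Lemma neg_eq a : Defs.neg a = (Rabs a - a) / 2.
Proof. unfold Defs.neg, Rmax, Rabs. destruct (Rle_dec 0 (- a)), (Rcase_abs a); lra. Qed.

Definition scheme_rhs (eps : R) (Z U V : R -> R -> R) (x y : R) : R :=
  / eps * ( Z (x - eps) y * Defs.pos (U (x - eps) y)
          - Z x y * Rabs (U x y)
          + Z (x + eps) y * Defs.neg (U (x + eps) y)
          + Z x (y - eps) * Defs.pos (V x (y - eps))
          - Z x y * Rabs (V x y)
          + Z x (y + eps) * Defs.neg (V x (y + eps)) ).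

Lemma rhs_scheme_rhs eps X u v x y t :
  rhs eps X u v x y t
  = scheme_rhs eps (fun x y => X x y t) (fun x y => u x y t) (fun x y => v x y t) x y.
Proof. reflexivity. Qed.

(* Under the CFL condition [h (|U| + |V|) <= eps], the explicit Euler step
   [Z + h * scheme_rhs] is a combination of values of [Z] with nonnegative
   weights; this bounds its absolute value pointwise. *)
Definition euler_majorant (eps h : R) (Z U V : R -> R -> R) (x y : R) : R :=
  (1 - h / eps * (Rabs (U x y) + Rabs (V x y))) * Rabs (Z x y)
  + h / eps * ( Rabs (Z (x - eps) y) * Defs.pos (U (x - eps) y)
              + Rabs (Z (x + eps) y) * Defs.neg (U (x + eps) y)
              + Rabs (Z x (y - eps)) * Defs.pos (V x (y - eps))
              + Rabs (Z x (y + eps)) * Defs.neg (V x (y + eps)) ).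

Lemma abs_euler_step_le eps h Z U V x y :
  0 < eps -> 0 <= h -> h * (Rabs (U x y) + Rabs (V x y)) <= eps ->
  Rabs (Z x y + h * scheme_rhs eps Z U V x y) <= euler_majorant eps h Z U V x y.
Proof.
  intros He Hh Hcfl.
  set (c := h / eps).
  set (c0 := 1 - c * (Rabs (U x y) + Rabs (V x y))).
  assert (Hc : 0 <= c) by (unfold c; apply Rmult_le_pos; [lra | left; apply Rinv_0_lt_compat; lra]).
  assert (Hc0 : 0 <= c0).
  { unfold c0, c. enough (h / eps * (Rabs (U x y) + Rabs (V x y)) <= 1) by lra.
    apply (Rmult_le_reg_r eps); [lra |]. unfold Rdiv.
    replace (h * / eps * (Rabs (U x y) + Rabs (V x y)) * eps)
      with (h * (Rabs (U x y) + Rabs (V x y))) by (field; lra). lra. }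
  unfold euler_majorant, scheme_rhs. fold c c0.
  replace (Z x y + h * _)
    with (c0 * Z x y + (c * (Z (x - eps) y * Defs.pos (U (x - eps) y))
          + c * (Z (x + eps) y * Defs.neg (U (x + eps) y))
          + c * (Z x (y - eps) * Defs.pos (V x (y - eps)))
          + c * (Z x (y + eps) * Defs.neg (V x (y + eps)))))
    by (unfold c0, c; field; lra).
  pose proof (pos_ge0 (U (x - eps) y)). pose proof (neg_ge0 (U (x + eps) y)).
  pose proof (pos_ge0 (V x (y - eps))). pose proof (neg_ge0 (V x (y + eps))).
  eapply Rle_trans; [apply Rabs_triang |]. apply Rplus_le_compat.
  { rewrite Rabs_mult, (Rabs_right c0) by lra. lra. }
  rewrite !Rmult_plus_distr_l.
  repeat (eapply Rle_trans; [apply Rabs_triang |]; apply Rplus_le_compat);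
    rewrite !Rabs_mult, (Rabs_right c) by lra;
    rewrite ?(Rabs_right (Defs.pos _)), ?(Rabs_right (Defs.neg _)) by lra; lra.
Qed.

Lemma euler_majorant_le_sup eps h m M Z U V x y :
  0 < eps -> 0 <= h -> h * (Rabs (U x y) + Rabs (V x y)) <= eps ->
  (forall x y, Rabs (Z x y) <= m) ->
  (forall x y, Rabs (U x y) <= M /\ Rabs (V x y) <= M) ->
  euler_majorant eps h Z U V x y <= m * (1 + h * (4 * M / eps)).
Proof.
  intros He Hh Hcfl HZ HUV.
  set (c := h / eps).
  assert (Hc : 0 <= c) by (unfold c; apply Rmult_le_pos; [lra | left; apply Rinv_0_lt_compat; lra]).
  assert (Hm : 0 <= m) by (eapply Rle_trans; [apply Rabs_pos | apply (HZ 0 0)]).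
  assert (Hterm : forall w p, 0 <= p -> p <= M -> Rabs w <= m -> Rabs w * p <= m * M).
  { intros w p Hp HpM Hw. pose proof (Rabs_pos w). nra. }
  assert (Hsum : Rabs (Z (x - eps) y) * Defs.pos (U (x - eps) y)
              + Rabs (Z (x + eps) y) * Defs.neg (U (x + eps) y)
              + Rabs (Z x (y - eps)) * Defs.pos (V x (y - eps))
              + Rabs (Z x (y + eps)) * Defs.neg (V x (y + eps)) <= m * (4 * M)).
  { destruct (HUV (x - eps) y) as [U1 _]. destruct (HUV (x + eps) y) as [U2 _].
    destruct (HUV x (y - eps)) as [_ V1]. destruct (HUV x (y + eps)) as [_ V2].
    pose proof (Hterm _ _ (pos_ge0 _) (Rle_trans _ _ _ (pos_le_abs _) U1) (HZ (x - eps) y)).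
    pose proof (Hterm _ _ (neg_ge0 _) (Rle_trans _ _ _ (neg_le_abs _) U2) (HZ (x + eps) y)).
    pose proof (Hterm _ _ (pos_ge0 _) (Rle_trans _ _ _ (pos_le_abs _) V1) (HZ x (y - eps))).
    pose proof (Hterm _ _ (neg_ge0 _) (Rle_trans _ _ _ (neg_le_abs _) V2) (HZ x (y + eps))).
    lra. }
  assert (Hcenter : (1 - c * (Rabs (U x y) + Rabs (V x y))) * Rabs (Z x y) <= m).
  { pose proof (Rabs_pos (U x y)). pose proof (Rabs_pos (V x y)). pose proof (Rabs_pos (Z x y)).
    pose proof (HZ x y).
    assert (c * (Rabs (U x y) + Rabs (V x y)) <= 1).
    { unfold c. apply (Rmult_le_reg_r eps); [lra |]. unfold Rdiv.
      replace (h * / eps * (Rabs (U x y) + Rabs (V x y)) * eps)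
        with (h * (Rabs (U x y) + Rabs (V x y))) by (field; lra). lra. }
    assert (0 <= c * (Rabs (U x y) + Rabs (V x y))) by (apply Rmult_le_pos; lra).
    nra. }
  unfold euler_majorant. fold c.
  replace (m * (1 + h * (4 * M / eps))) with (m + c * (m * (4 * M))) by (unfold c; field; lra).
  apply Rplus_le_compat; [exact Hcenter |]. now apply Rmult_le_compat_l.
Qed.

Definition cont2 (f : R -> R -> R) : Prop := forall x y, continuity_2d_pt f x y.

Lemma cont2_Cb f : Cb f -> cont2 f.
Proof. intros [_ H] x y. apply continuity_2d_pt_filterlim, H. Qed.

Lemma cont2_ext f g : (forall x y, f x y = g x y) -> cont2 f -> cont2 g.
Proof. intros E H x y. eapply continuity_2d_pt_ext; [exact E | apply H]. Qed.

Lemma cont2_const c : cont2 (fun _ _ => c).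
Proof. intros x y; apply continuity_2d_pt_const. Qed.
Lemma cont2_plus f g : cont2 f -> cont2 g -> cont2 (fun x y => f x y + g x y).
Proof. intros Hf Hg x y; apply continuity_2d_pt_plus; auto. Qed.
Lemma cont2_minus f g : cont2 f -> cont2 g -> cont2 (fun x y => f x y - g x y).
Proof. intros Hf Hg x y; apply continuity_2d_pt_minus; auto. Qed.
Lemma cont2_opp f : cont2 f -> cont2 (fun x y => - f x y).
Proof. intros H x y; apply continuity_2d_pt_opp, H. Qed.
Lemma cont2_mult f g : cont2 f -> cont2 g -> cont2 (fun x y => f x y * g x y).
Proof. intros Hf Hg x y; apply continuity_2d_pt_mult; auto. Qed.
Lemma cont2_scal c f : cont2 f -> cont2 (fun x y => c * f x y).
Proof. intros; apply cont2_mult; [apply cont2_const | auto]. Qed.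
Lemma cont2_abs f : cont2 f -> cont2 (fun x y => Rabs (f x y)).
Proof. intros H x y. apply continuity_1d_2d_pt_comp; [| apply H]. apply Rcontinuity_abs. Qed.

Lemma cont2_pos f : cont2 f -> cont2 (fun x y => Defs.pos (f x y)).
Proof.
  intros H. apply (cont2_ext (fun x y => / 2 * (f x y + Rabs (f x y)))).
  - intros; rewrite pos_eq; unfold Rdiv; ring.
  - apply cont2_scal, cont2_plus; [| apply cont2_abs]; auto.
Qed.

Lemma cont2_neg f : cont2 f -> cont2 (fun x y => Defs.neg (f x y)).
Proof.
  intros H. apply (cont2_ext (fun x y => / 2 * (Rabs (f x y) - f x y))).
  - intros; rewrite neg_eq; unfold Rdiv; ring.
  - apply cont2_scal, cont2_minus; [apply cont2_abs |]; auto.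
Qed.

Lemma cont2_shift f a b : cont2 f -> cont2 (fun x y => f (x + a) (y + b)).
Proof.
  intros H x y e. destruct (H (x + a) (y + b) e) as [d Hd].
  exists d. intros x' y' Hx Hy. apply Hd.
  - now replace (x' + a - (x + a)) with (x' - x) by ring.
  - now replace (y' + b - (y + b)) with (y' - y) by ring.
Qed.

Lemma cont2_shift_x f a : cont2 f -> cont2 (fun x y => f (x + a) y).
Proof.
  intros H. apply (cont2_ext (fun x y => f (x + a) (y + 0))); [intros; now rewrite Rplus_0_r |].
  now apply cont2_shift.
Qed.

Lemma cont2_shift_y f b : cont2 f -> cont2 (fun x y => f x (y + b)).
Proof.
  intros H. apply (cont2_ext (fun x y => f (x + 0) (y + b))); [intros; now rewrite Rplus_0_r |].
  now apply cont2_shift.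
Qed.

Lemma cont2_continuity_pt f x y : cont2 f -> continuity_pt (f x) y.
Proof.
  intros H. apply continuity_pt_locally. intros e.
  destruct (H x y e) as [d Hd]. exists d. intros y' Hy. apply Hd; [| exact Hy].
  rewrite Rminus_diag, Rabs_R0. apply cond_pos.
Qed.

Lemma cont2_euler_majorant eps h Z U V :
  cont2 Z -> cont2 U -> cont2 V -> cont2 (euler_majorant eps h Z U V).
Proof.
  intros HZ HU HV. unfold euler_majorant.
  repeat first [ apply cont2_plus | apply cont2_minus | apply cont2_opp | apply cont2_mult | apply cont2_const
               | apply cont2_abs | apply cont2_pos | apply cont2_neg
               | apply cont2_shift_x | apply cont2_shift_y | assumption ].
Qed.

Lemma ex_RInt_continuity_pt g a b : (forall z, continuity_pt g z) -> ex_RInt g a b.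
Proof.
  intros H. apply (ex_RInt_continuous (V := R_CompleteNormedModule)).
  intros z _. apply continuity_pt_filterlim, H.
Qed.

Lemma RInt_le_const g a b c : a <= b -> ex_RInt g a b ->
  (forall z, a <= z <= b -> g z <= c) -> RInt g a b <= (b - a) * c.
Proof.
  intros Hab Hg Hc. eapply Rle_trans.
  - apply RInt_le with (g := fun _ => c); auto. apply ex_RInt_const.
    intros; apply Hc; lra.
  - rewrite RInt_const. apply Rle_refl.
Qed.

Definition inner_int (f : R -> R -> R) (x : R) : R := RInt (f x) (- PI) PI.

Lemma dint_inner_int f : dint f = RInt (inner_int f) (- PI) PI.
Proof. reflexivity. Qed.

Lemma continuity_pt_inner_int f x : cont2 f -> continuity_pt (inner_int f) x.
Proof.
  intros H. apply continuity_pt_locally. intros e.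
  pose proof PI_RGT_0 as Hpi.
  assert (He : 0 < e / (2 * (2 * PI))) by (apply Rdiv_lt_0_compat; [apply cond_pos | lra]).
  destruct (uniform_continuity_2d f (x - 1) (x + 1) (- PI) PI
     (fun a b _ _ => H a b) (mkposreal _ He)) as [d Hd].
  assert (Hd1 : 0 < Rmin d 1) by (apply Rmin_glb_lt; [apply cond_pos | lra]).
  exists (mkposreal _ Hd1). intros x' Hx. change (Rabs (x' - x) < Rmin d 1) in Hx.
  assert (Hxd : Rabs (x' - x) < d) by (eapply Rlt_le_trans; [exact Hx | apply Rmin_l]).
  assert (Hx1 : Rabs (x' - x) < 1) by (eapply Rlt_le_trans; [exact Hx | apply Rmin_r]).
  apply Rabs_def2 in Hx1.
  assert (Ex : forall w, ex_RInt (f w) (- PI) PI)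
    by (intros; apply ex_RInt_continuity_pt; intros; now apply cont2_continuity_pt).
  unfold inner_int.
  assert (Hdiff : RInt (f x') (- PI) PI - RInt (f x) (- PI) PI
                 = RInt (fun z => f x' z - f x z) (- PI) PI)
    by (symmetry; exact (RInt_minus (V := R_CompleteNormedModule) _ _ _ _ (Ex x') (Ex x))).
  rewrite Hdiff.
  eapply Rle_lt_trans.
  { apply abs_RInt_le; [lra | apply (ex_RInt_minus (V := R_CompleteNormedModule)); auto]. }
  eapply Rle_lt_trans.
  { apply RInt_le_const with (c := e / (2 * (2 * PI))); [lra | |].
    - apply ex_RInt_continuity_pt. intros z.
      apply continuity_pt_comp with (f1 := fun z => f x' z - f x z) (f2 := Rabs).
      + apply continuity_pt_minus; now apply cont2_continuity_pt.
      + apply Rcontinuity_abs.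
    - intros z Hz. left. apply Hd; try lra; try exact Hxd.
      rewrite Rminus_diag, Rabs_R0; apply cond_pos. }
  replace ((PI - - PI) * (e / (2 * (2 * PI)))) with (e / 2) by (field; lra).
  pose proof (cond_pos e). lra.
Qed.

Lemma ex_RInt_inner_int f : cont2 f ->
  (forall x, ex_RInt (f x) (- PI) PI) /\ ex_RInt (inner_int f) (- PI) PI.
Proof.
  intros H. split.
  - intros; apply ex_RInt_continuity_pt; intros; now apply cont2_continuity_pt.
  - apply ex_RInt_continuity_pt; intros; now apply continuity_pt_inner_int.
Qed.

Lemma dint_ext f g : (forall x y, f x y = g x y) -> dint f = dint g.
Proof. intros E. unfold dint. apply RInt_ext. intros. apply RInt_ext. auto. Qed.

Lemma dint_le f g : cont2 f -> cont2 g -> (forall x y, f x y <= g x y) -> dint f <= dint g.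
Proof.
  intros Hf Hg Hle. pose proof PI_RGT_0.
  destruct (ex_RInt_inner_int f Hf) as [Hf1 Hf2], (ex_RInt_inner_int g Hg) as [Hg1 Hg2].
  rewrite !dint_inner_int. apply RInt_le; auto; [lra |].
  intros x _. apply RInt_le; auto; lra.
Qed.

Lemma dint_plus f g : cont2 f -> cont2 g -> dint (fun x y => f x y + g x y) = dint f + dint g.
Proof.
  intros Hf Hg.
  destruct (ex_RInt_inner_int f Hf) as [Hf1 Hf2], (ex_RInt_inner_int g Hg) as [Hg1 Hg2].
  rewrite !dint_inner_int, (RInt_ext _ (fun x => plus (inner_int f x) (inner_int g x))).
  - apply (RInt_plus (V := R_CompleteNormedModule)); auto.
  - intros x _. apply (RInt_plus (V := R_CompleteNormedModule)); auto.
Qed.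

Lemma dint_scal c f : cont2 f -> dint (fun x y => c * f x y) = c * dint f.
Proof.
  intros Hf. destruct (ex_RInt_inner_int f Hf) as [Hf1 Hf2].
  rewrite !dint_inner_int, (RInt_ext _ (fun x => scal c (inner_int f x))).
  - apply (RInt_scal (V := R_CompleteNormedModule)); auto.
  - intros x _. apply (RInt_scal (V := R_CompleteNormedModule)); auto.
Qed.

Lemma dint_const c : dint (fun _ _ => c) = 2 * PI * (2 * PI * c).
Proof.
  unfold dint. rewrite (RInt_ext _ (fun _ => 2 * PI * c)).
  - rewrite RInt_const. change ((PI - - PI) * (2 * PI * c) = 2 * PI * (2 * PI * c)). ring.
  - intros. rewrite RInt_const. change ((PI - - PI) * c = 2 * PI * c). ring.
Qed.

Lemma dint_le_add_const f g c : cont2 f -> cont2 g -> (forall x y, f x y <= g x y + c) ->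
  dint f <= dint g + 2 * PI * (2 * PI * c).
Proof.
  intros Hf Hg H. rewrite <- dint_const, <- dint_plus; [| exact Hg | apply cont2_const].
  apply dint_le; auto. apply cont2_plus; [exact Hg | apply cont2_const].
Qed.

Lemma dint_abs_sub_le f g c : cont2 f -> cont2 g -> (forall x y, Rabs (f x y - g x y) <= c) ->
  Rabs (dint f - dint g) <= 2 * PI * (2 * PI * c).
Proof.
  intros Hf Hg H. apply Rabs_le; split.
  - enough (dint g <= dint f + 2 * PI * (2 * PI * c)) by lra.
    apply dint_le_add_const; auto. intros x y. specialize (H x y).
    rewrite Rabs_minus_sym in H. apply Rabs_le_between in H; lra.
  - enough (dint f <= dint g + 2 * PI * (2 * PI * c)) by lra.
    apply dint_le_add_const; auto. intros x y. specialize (H x y).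
    apply Rabs_le_between in H; lra.
Qed.

Lemma RInt_periodic_shift g e : (forall z, continuity_pt g z) ->
  (forall z, g (z + 2 * PI) = g z) ->
  RInt (fun x => g (x + e)) (- PI) PI = RInt g (- PI) PI.
Proof.
  intros Hc Hp.
  assert (Ex : forall a b, ex_RInt g a b) by (intros; now apply ex_RInt_continuity_pt).
  assert (Hshift : RInt (fun x => g (x + e)) (- PI) PI = RInt g (- PI + e) (PI + e)).
  { replace (- PI + e) with (1 * - PI + e) by ring. replace (PI + e) with (1 * PI + e) by ring.
    rewrite <- RInt_comp_lin by auto. apply RInt_ext. intros x _.
    change (g (x + e) = 1 * g (1 * x + e)). now rewrite !Rmult_1_l. }
  assert (Hwrap : RInt g PI (PI + e) = RInt g (- PI) (- PI + e)).
  { replace PI with (1 * - PI + 2 * PI) at 1 by ring.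
    replace (PI + e) with (1 * (- PI + e) + 2 * PI) by ring.
    rewrite <- RInt_comp_lin by auto. apply RInt_ext. intros x _.
    change (1 * g (1 * x + 2 * PI) = g x). rewrite !Rmult_1_l. apply Hp. }
  rewrite Hshift, <- (RInt_Chasles g (- PI + e) PI (PI + e)) by auto.
  rewrite <- (RInt_Chasles g (- PI) (- PI + e) PI) by auto.
  rewrite Hwrap. apply plus_comm.
Qed.

Lemma dint_shift_x f e : cont2 f -> (forall x y, f (x + 2 * PI) y = f x y) ->
  dint (fun x y => f (x + e) y) = dint f.
Proof.
  intros Hf Hp. rewrite !dint_inner_int.
  apply (RInt_periodic_shift (inner_int f)).
  - intros; now apply continuity_pt_inner_int.
  - intros z. apply RInt_ext. intros. apply Hp.
Qed.

Lemma dint_shift_y f e : cont2 f -> (forall x y, f x (y + 2 * PI) = f x y) ->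
  dint (fun x y => f x (y + e)) = dint f.
Proof.
  intros Hf Hp. apply RInt_ext. intros x _. apply (RInt_periodic_shift (f x)).
  - intros; now apply cont2_continuity_pt.
  - intros; apply Hp.
Qed.

(* The integral of the majorant equals that of [|Z|]: the weights flowing out of a
   cell reappear, after a translation by [eps], as the weights flowing into its
   neighbours. *)
Lemma dint_euler_majorant eps h (Z U V : R -> R -> R) :
  cont2 Z -> cont2 U -> cont2 V -> periodic2 Z -> periodic2 U -> periodic2 V ->
  dint (euler_majorant eps h Z U V) = dint (fun x y => Rabs (Z x y)).
Proof.
  intros HZ HU HV PZ PU PV.
  set (c := h / eps).
  set (F1 := fun x y => Rabs (Z x y) * Defs.pos (U x y)).
  set (F2 := fun x y => Rabs (Z x y) * Defs.neg (U x y)).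
  set (F3 := fun x y => Rabs (Z x y) * Defs.pos (V x y)).
  set (F4 := fun x y => Rabs (Z x y) * Defs.neg (V x y)).
  assert (C1 : cont2 F1) by (apply cont2_mult; [apply cont2_abs | apply cont2_pos]; auto).
  assert (C2 : cont2 F2) by (apply cont2_mult; [apply cont2_abs | apply cont2_neg]; auto).
  assert (C3 : cont2 F3) by (apply cont2_mult; [apply cont2_abs | apply cont2_pos]; auto).
  assert (C4 : cont2 F4) by (apply cont2_mult; [apply cont2_abs | apply cont2_neg]; auto).
  assert (CA : cont2 (fun x y => Rabs (Z x y))) by (apply cont2_abs; auto).
  set (inflow := fun x y => F1 (x + - eps) y + F2 (x + eps) y + F3 x (y + - eps) + F4 x (y + eps)).
  set (outflow := fun x y => F1 x y + F2 x y + F3 x y + F4 x y).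
  assert (Cin : cont2 inflow)
    by (unfold inflow; repeat apply cont2_plus; try apply cont2_shift_x; try apply cont2_shift_y; auto).
  assert (Cout : cont2 outflow) by (unfold outflow; repeat apply cont2_plus; auto).
  assert (Hbalance : dint inflow = dint outflow).
  { unfold inflow, outflow.
    rewrite !dint_plus; repeat apply cont2_plus; try apply cont2_shift_x; try apply cont2_shift_y; auto.
    rewrite (dint_shift_x F1), (dint_shift_x F2), (dint_shift_y F3), (dint_shift_y F4); auto;
      intros x y; unfold F1, F2, F3, F4;
      rewrite ?(proj1 (PZ x y)), ?(proj2 (PZ x y)), ?(proj1 (PU x y)), ?(proj2 (PU x y)),
        ?(proj1 (PV x y)), ?(proj2 (PV x y)); reflexivity. }
  rewrite (dint_ext _ (fun x y => Rabs (Z x y) + (c * inflow x y + (- c) * outflow x y))).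
  2:{ intros x y. unfold euler_majorant, inflow, outflow, F1, F2, F3, F4. fold c.
      rewrite <- (pos_add_neg (U x y)), <- (pos_add_neg (V x y)).
      unfold Rminus at 2 3 4 5. ring. }
  rewrite dint_plus, dint_plus, !dint_scal by (auto; try apply cont2_plus; apply cont2_scal; auto).
  rewrite Hbalance. ring.
Qed.

Definition sup_abs (w : R -> R -> R) : R :=
  real (Lub_Rbar (fun r => exists x y, r = Rabs (w x y))).

Lemma sup_abs_spec w B : (forall x y, Rabs (w x y) <= B) ->
  (forall x y, Rabs (w x y) <= sup_abs w) /\
  (forall c, (forall x y, Rabs (w x y) <= c) -> sup_abs w <= c).
Proof.
  intros HB. unfold sup_abs.
  destruct (Lub_Rbar_correct (fun r => exists x y, r = Rabs (w x y))) as [Hub Hlub].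
  assert (Hle : Rbar_le (Lub_Rbar (fun r => exists x y, r = Rabs (w x y))) B)
    by (apply Hlub; intros r [x [y ->]]; apply HB).
  assert (Hge : Rbar_le (Rabs (w 0 0)) (Lub_Rbar (fun r => exists x y, r = Rabs (w x y))))
    by (apply Hub; now exists 0, 0).
  destruct (Lub_Rbar _) as [l | |]; simpl in *; try contradiction.
  split.
  - intros x y. exact (Hub (Rabs (w x y)) (ex_intro _ x (ex_intro _ y eq_refl))).
  - intros c Hc. apply (Hlub c). intros r [x [y ->]]. apply Hc.
Qed.

Lemma sup_abs_sub_le w1 w2 B1 B2 c :
  (forall x y, Rabs (w1 x y) <= B1) -> (forall x y, Rabs (w2 x y) <= B2) ->
  (forall x y, Rabs (w1 x y - w2 x y) <= c) -> Rabs (sup_abs w1 - sup_abs w2) <= c.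
Proof.
  intros H1 H2 H.
  destruct (sup_abs_spec w1 B1 H1) as [Hge1 Hle1], (sup_abs_spec w2 B2 H2) as [Hge2 Hle2].
  apply Rabs_le; split.
  - enough (sup_abs w2 <= sup_abs w1 + c) by lra.
    apply Hle2. intros x y. specialize (H x y). rewrite Rabs_minus_sym in H.
    pose proof (Rabs_triang_inv (w2 x y) (w1 x y)). pose proof (Hge1 x y). lra.
  - enough (sup_abs w1 <= sup_abs w2 + c) by lra.
    apply Hle1. intros x y. specialize (H x y).
    pose proof (Rabs_triang_inv (w1 x y) (w2 x y)). pose proof (Hge2 x y). lra.
Qed.

Lemma scheme_rhs_translate_sub eps Z U V a b x y :
  (forall x y, U (x + a) (y + b) = U x y) -> (forall x y, V (x + a) (y + b) = V x y) ->
  scheme_rhs eps (fun x y => Z (x + a) (y + b) - Z x y) U V x y =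
  scheme_rhs eps Z U V (x + a) (y + b) - scheme_rhs eps Z U V x y.
Proof.
  intros HU HV. unfold scheme_rhs.
  replace (U (x + a - eps) (y + b)) with (U (x - eps) y) by (rewrite <- HU; f_equal; ring).
  replace (U (x + a + eps) (y + b)) with (U (x + eps) y) by (rewrite <- HU; f_equal; ring).
  replace (V (x + a) (y + b - eps)) with (V x (y - eps)) by (rewrite <- HV; f_equal; ring).
  replace (V (x + a) (y + b + eps)) with (V x (y + eps)) by (rewrite <- HV; f_equal; ring).
  rewrite HU, HV.
  replace (x - eps + a) with (x + a - eps) by ring.
  replace (x + eps + a) with (x + a + eps) by ring.
  replace (y - eps + b) with (y + b - eps) by ring.
  replace (y + eps + b) with (y + b + eps) by ring.
  ring.
Qed.

Definition solves_scheme (eps : R) (Z U V : R -> R -> R -> R) : Prop :=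
  forall t, 0 <= t -> forall e, 0 < e -> exists d, 0 < d /\
    forall s, t < s < t + d -> forall x y,
      Rabs (Z s x y - Z t x y - (s - t) * scheme_rhs eps (Z t) (U t) (V t) x y) <= (s - t) * e.

Lemma sup_derivative_sup_continuous F F' :
  Cb_path F' -> sup_derivative F F' -> sup_continuous F.
Proof.
  intros HF' Hder t Ht e He.
  destruct (proj1 (HF' t Ht)) as [B HB].
  assert (HB0 : 0 <= B) by (eapply Rle_trans; [apply Rabs_pos | apply (HB 0 0)]).
  destruct (Hder t Ht 1 Rlt_0_1) as [d [Hd Hquot]].
  assert (Hd' : 0 < e / (B + 1)) by (apply Rdiv_lt_0_compat; lra).
  exists (Rmin d (e / (B + 1))); split; [now apply Rmin_glb_lt |].
  intros s Hs Hst x y.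
  destruct (Req_dec s t) as [-> | Hne]; [rewrite Rminus_diag, Rabs_R0; lra |].
  specialize (Hquot s Hs Hne (Rlt_le_trans _ _ _ Hst (Rmin_l _ _)) x y).
  assert (Hslope : Rabs ((F s x y - F t x y) / (s - t)) <= B + 1).
  { pose proof (Rabs_triang_inv ((F s x y - F t x y) / (s - t)) (F' t x y)).
    pose proof (HB x y). lra. }
  replace (F s x y - F t x y) with ((s - t) * ((F s x y - F t x y) / (s - t))) by (field; lra).
  rewrite Rabs_mult.
  apply Rle_trans with (e / (B + 1) * (B + 1)); [| right; field; lra].
  pose proof (Rmin_r d (e / (B + 1))).
  apply Rmult_le_compat; try apply Rabs_pos; lra.
Qed.

Lemma sup_derivative_solves_scheme eps F F' U V :
  sup_derivative F F' ->
  (forall t, 0 <= t -> forall x y, F' t x y = scheme_rhs eps (F t) (U t) (V t) x y) ->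
  solves_scheme eps F U V.
Proof.
  intros Hder HF' t Ht e He. destruct (Hder t Ht e He) as [d [Hd Hquot]].
  exists d; split; [exact Hd |]. intros s Hs x y.
  specialize (Hquot s ltac:(lra) ltac:(lra) ltac:(rewrite Rabs_right; lra) x y).
  rewrite HF' in Hquot by exact Ht.
  replace (F s x y - F t x y - (s - t) * scheme_rhs eps (F t) (U t) (V t) x y)
    with ((s - t) * ((F s x y - F t x y) / (s - t) - scheme_rhs eps (F t) (U t) (V t) x y))
    by (field; lra).
  rewrite Rabs_mult, (Rabs_right (s - t)) by lra.
  apply Rmult_le_compat_l; lra.
Qed.

Section Scheme.

Variables (eps M : R) (Z U V : R -> R -> R -> R).
Hypothesis eps_gt0 : 0 < eps.
Hypothesis UV_bounded :
  forall t, 0 <= t -> forall x y, Rabs (U t x y) <= M /\ Rabs (V t x y) <= M.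
Hypothesis Z_Cb : Cb_path Z.
Hypothesis Z_sup_continuous : sup_continuous Z.
Hypothesis Z_solves : solves_scheme eps Z U V.

Lemma bound_nonneg : 0 <= M.
Proof. eapply Rle_trans; [apply Rabs_pos | apply (UV_bounded 0 (Rle_refl 0) 0 0)]. Qed.

Lemma solves_scheme_cfl t e : 0 <= t -> 0 < e -> exists d, 0 < d /\
  forall s, t < s < t + d ->
    (forall x y, (s - t) * (Rabs (U t x y) + Rabs (V t x y)) <= eps) /\
    (forall x y, Rabs (Z s x y - Z t x y - (s - t) * scheme_rhs eps (Z t) (U t) (V t) x y)
                 <= (s - t) * e).
Proof.
  intros Ht He. destruct (Z_solves t Ht e He) as [d [Hd Hstep]].
  pose proof bound_nonneg.
  assert (Hcfl : 0 < eps / (2 * M + 1)) by (apply Rdiv_lt_0_compat; lra).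
  exists (Rmin d (eps / (2 * M + 1))); split; [now apply Rmin_glb_lt |].
  intros s Hs. pose proof (Rmin_l d (eps / (2 * M + 1))). pose proof (Rmin_r d (eps / (2 * M + 1))).
  split; [| apply Hstep; lra].
  intros x y. destruct (UV_bounded t Ht x y) as [HU HV].
  apply Rle_trans with ((eps / (2 * M + 1)) * (2 * M + 1)); [| right; field; lra].
  apply Rmult_le_compat; [lra | pose proof (Rabs_pos (U t x y)); pose proof (Rabs_pos (V t x y)); lra | lra | lra].
Qed.

Section Translation.

Variables a b : R.
Hypothesis UV_translation_invariant : forall t, 0 <= t -> forall x y,
  U t (x + a) (y + b) = U t x y /\ V t (x + a) (y + b) = V t x y.
Hypothesis Z0_translation_invariant : forall x y, Z 0 (x + a) (y + b) = Z 0 x y.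

Let defect t x y := Z t (x + a) (y + b) - Z t x y.

Lemma defect_bounded t : 0 <= t -> exists B, forall x y, Rabs (defect t x y) <= B.
Proof.
  intros Ht. destruct (proj1 (Z_Cb t Ht)) as [B HB]. exists (2 * B). intros x y.
  unfold defect. eapply Rle_trans; [apply Rabs_triang |]. rewrite Rabs_Ropp.
  pose proof (HB (x + a) (y + b)). pose proof (HB x y). lra.
Qed.

Lemma sup_defect_continuous : continuous_on_nonneg (fun t => sup_abs (defect t)).
Proof.
  intros t Ht e He. destruct (Z_sup_continuous t Ht (e / 3) ltac:(lra)) as [d [Hd Hclose]].
  exists d; split; [exact Hd |]. intros s Hs Hst.
  destruct (defect_bounded s Hs) as [Bs HBs], (defect_bounded t Ht) as [Bt HBt].
  eapply Rle_lt_trans; [apply (sup_abs_sub_le _ _ Bs Bt (2 * (e / 3))) | lra]; auto.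
  intros x y. unfold defect.
  replace (Z s (x + a) (y + b) - Z s x y - (Z t (x + a) (y + b) - Z t x y))
    with ((Z s (x + a) (y + b) - Z t (x + a) (y + b)) - (Z s x y - Z t x y)) by ring.
  eapply Rle_trans; [apply Rabs_triang |]. rewrite Rabs_Ropp.
  pose proof (Hclose s Hs Hst (x + a) (y + b)). pose proof (Hclose s Hs Hst x y). lra.
Qed.

(* The defect solves the same linear scheme, so one Euler step amplifies its
   sup norm by at most [1 + h * 4 M / eps]. *)
Lemma sup_defect_growth t : 0 <= t -> forall e, 0 < e -> exists d, 0 < d /\
  forall s, t < s < t + d ->
    sup_abs (defect s) <= sup_abs (defect t) * (1 + (s - t) * (4 * M / eps)) + (s - t) * e.
Proof.
  intros Ht e He. destruct (solves_scheme_cfl t (e / 2) Ht ltac:(lra)) as [d [Hd Hstep]].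
  exists d; split; [exact Hd |]. intros s Hs. destruct (Hstep s Hs) as [Hcfl Herr].
  destruct (defect_bounded s ltac:(lra)) as [Bs HBs], (defect_bounded t Ht) as [Bt HBt].
  destruct (sup_abs_spec _ Bt HBt) as [Hsup_t _].
  apply (proj2 (sup_abs_spec _ Bs HBs)). intros x y.
  set (h := s - t) in *.
  assert (Hsplit : defect s x y = (defect t x y + h * scheme_rhs eps (defect t) (U t) (V t) x y)
       + ((Z s (x + a) (y + b) - Z t (x + a) (y + b)
           - h * scheme_rhs eps (Z t) (U t) (V t) (x + a) (y + b))
          - (Z s x y - Z t x y - h * scheme_rhs eps (Z t) (U t) (V t) x y))).
  { unfold defect. rewrite scheme_rhs_translate_sub.
    - unfold h. ring.
    - intros; apply (UV_translation_invariant t Ht).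
    - intros; apply (UV_translation_invariant t Ht). }
  rewrite Hsplit. eapply Rle_trans; [apply Rabs_triang |].
  eapply Rle_trans; [apply Rplus_le_compat; [| apply Rabs_triang] |].
  { eapply Rle_trans; [apply abs_euler_step_le; auto; unfold h; lra |].
    apply (euler_majorant_le_sup eps h (sup_abs (defect t)) M); auto; unfold h; lra. }
  rewrite Rabs_Ropp.
  pose proof (Herr (x + a) (y + b)). pose proof (Herr x y). lra.
Qed.

Lemma solution_translation_invariant t x y : 0 <= t -> Z t (x + a) (y + b) = Z t x y.
Proof.
  intros Ht.
  assert (Hsup_nonneg : forall t, 0 <= t -> 0 <= sup_abs (defect t)).
  { intros t' Ht'. destruct (defect_bounded t' Ht') as [B HB].
    eapply Rle_trans; [apply Rabs_pos | apply (proj1 (sup_abs_spec _ B HB) 0 0)]. }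
  assert (Hsup0 : sup_abs (defect 0) = 0).
  { destruct (defect_bounded 0 (Rle_refl 0)) as [B HB].
    apply Rle_antisym; [| now apply Hsup_nonneg, Rle_refl].
    apply (proj2 (sup_abs_spec _ B HB)). intros x' y'.
    unfold defect. rewrite Z0_translation_invariant, Rminus_diag, Rabs_R0. apply Rle_refl. }
  assert (HK : 0 <= 4 * M / eps)
    by (pose proof bound_nonneg; apply Rmult_le_pos; [lra | left; apply Rinv_0_lt_compat; lra]).
  pose proof (gronwall_zero _ _ sup_defect_continuous Hsup_nonneg Hsup0 HK sup_defect_growth t Ht)
    as Hzero.
  destruct (defect_bounded t Ht) as [B HB].
  pose proof (proj1 (sup_abs_spec _ B HB) x y) as Hxy. rewrite Hzero in Hxy.
  unfold defect in Hxy. pose proof (Rabs_pos (Z t (x + a) (y + b) - Z t x y)).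
  apply Rminus_diag_uniq, Rabs_eq_0. lra.
Qed.

End Translation.

Hypothesis U_Cb : Cb_path U.
Hypothesis V_Cb : Cb_path V.
Hypothesis UV_periodic : forall t, 0 <= t -> periodic2 (U t) /\ periodic2 (V t).
Hypothesis Z0_periodic : periodic2 (Z 0).

Lemma solution_periodic t : 0 <= t -> periodic2 (Z t).
Proof.
  intros Ht x y. split.
  - rewrite <- (Rplus_0_r y) at 1. apply (solution_translation_invariant (2 * PI) 0); auto.
    + intros t' Ht' x' y'. rewrite Rplus_0_r.
      split; [apply (proj1 (UV_periodic t' Ht')) | apply (proj2 (UV_periodic t' Ht'))].
    + intros x' y'. rewrite Rplus_0_r. apply Z0_periodic.
  - rewrite <- (Rplus_0_r x) at 1. apply (solution_translation_invariant 0 (2 * PI)); auto.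
    + intros t' Ht' x' y'. rewrite Rplus_0_r.
      split; [apply (proj1 (UV_periodic t' Ht')) | apply (proj2 (UV_periodic t' Ht'))].
    + intros x' y'. rewrite Rplus_0_r. apply Z0_periodic.
Qed.

Let L1_norm t := dint (fun x y => Rabs (Z t x y)).

Lemma L1_norm_continuous : continuous_on_nonneg L1_norm.
Proof.
  intros t Ht e He.
  assert (Harea : 0 < 2 * PI * (2 * PI)) by (pose proof PI_RGT_0; nra).
  set (e' := e / (2 * (2 * PI * (2 * PI)))).
  assert (He' : 0 < e') by (unfold e'; apply Rdiv_lt_0_compat; lra).
  destruct (Z_sup_continuous t Ht e' He') as [d [Hd Hclose]].
  exists d; split; [exact Hd |]. intros s Hs Hst.
  eapply Rle_lt_trans.
  - apply dint_abs_sub_le with (c := e'); try apply cont2_abs, cont2_Cb, Z_Cb; auto.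
    intros x y. eapply Rle_trans; [apply Rabs_triang_inv2 | apply Hclose; auto].
  - replace (2 * PI * (2 * PI * e')) with (e / 2) by (unfold e'; field; pose proof PI_RGT_0; lra).
    lra.
Qed.

(* Mass conservation of the Euler majorant makes [L1_norm] nonincreasing to first order. *)
Lemma L1_norm_right_dini_nonpos : right_dini_nonpos L1_norm.
Proof.
  intros t Ht e He.
  assert (Harea : 0 < 2 * PI * (2 * PI)) by (pose proof PI_RGT_0; nra).
  set (de := e / (2 * PI * (2 * PI))).
  assert (Hde : 0 < de) by (unfold de; apply Rdiv_lt_0_compat; lra).
  destruct (solves_scheme_cfl t de Ht Hde) as [d [Hd Hstep]].
  exists d; split; [exact Hd |]. intros s Hs. destruct (Hstep s Hs) as [Hcfl Herr].
  set (h := s - t) in *.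
  assert (HZt : cont2 (Z t)) by now apply cont2_Cb, Z_Cb.
  assert (HUt : cont2 (U t)) by now apply cont2_Cb, U_Cb.
  assert (HVt : cont2 (V t)) by now apply cont2_Cb, V_Cb.
  unfold L1_norm.
  rewrite <- (dint_euler_majorant eps h (Z t) (U t) (V t)); auto;
    [| apply solution_periodic | apply UV_periodic | apply UV_periodic]; auto.
  replace (h * e) with (2 * PI * (2 * PI * (h * de))) by (unfold de; field; pose proof PI_RGT_0; lra).
  apply dint_le_add_const.
  - apply cont2_abs, cont2_Cb, Z_Cb. unfold h in *; lra.
  - now apply cont2_euler_majorant.
  - intros x y.
    pose proof (abs_euler_step_le eps h (Z t) (U t) (V t) x y eps_gt0 ltac:(unfold h; lra) (Hcfl x y)).
    pose proof (Herr x y).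
    replace (Z s x y) with ((Z t x y + h * scheme_rhs eps (Z t) (U t) (V t) x y)
      + (Z s x y - Z t x y - h * scheme_rhs eps (Z t) (U t) (V t) x y)) by ring.
    eapply Rle_trans; [apply Rabs_triang |]. lra.
Qed.

Lemma L1_norm_nonincreasing t : 0 <= t -> L1_norm t <= L1_norm 0.
Proof.
  intros Ht. exact (right_dini_nonpos_nonincreasing _ 0 t
    L1_norm_continuous L1_norm_right_dini_nonpos (Rle_refl 0) Ht).
Qed.

End Scheme.

Theorem lemma4
  (u v X : R -> R -> R -> R -> R)   (* eps x y t *)
  (rho0 : R -> R -> R -> R)         (* eps x y *)
  (Hu_per : forall eps, 0 < eps < 1 -> forall t, 0 <= t ->
     periodic2 (fun x y => u eps x y t) /\ periodic2 (fun x y => v eps x y t))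
  (Hu_Cb : forall eps, 0 < eps < 1 ->
     Cb_path (fun t x y => u eps x y t) /\ Cb_path (fun t x y => v eps x y t))
  (Hu_cont : forall eps, 0 < eps < 1 ->
     sup_continuous (fun t x y => u eps x y t) /\
     sup_continuous (fun t x y => v eps x y t))
  (Hu_bd : exists M, forall eps, 0 < eps < 1 -> forall x y t, 0 <= t ->
     Rabs (u eps x y t) <= M /\ Rabs (v eps x y t) <= M)
  (Hrho_Cb : forall eps, 0 < eps < 1 -> Cb (rho0 eps))
  (Hrho_per : forall eps, 0 < eps < 1 -> periodic2 (rho0 eps))
  (Hrho_L1 : exists B, forall eps, 0 < eps < 1 ->
     dint (fun x y => Rabs (rho0 eps x y)) <= B)
  (HX : forall eps, 0 < eps < 1 ->
     Cb_path (fun t x y => X eps x y t) /\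
     (forall x y, X eps x y 0 = rho0 eps x y) /\
     exists X' : R -> R -> R -> R,
       Cb_path X' /\ sup_continuous X' /\
       sup_derivative (fun t x y => X eps x y t) X' /\
       (forall t, 0 <= t -> forall x y,
          X' t x y = rhs eps (X eps) (u eps) (v eps) x y t)) :
  exists C, forall eps, 0 < eps < 1 -> forall t, 0 <= t ->
    dint (fun x y => Rabs (X eps x y t)) <= dint (fun x y => Rabs (rho0 eps x y)) /\
    dint (fun x y => Rabs (rho0 eps x y)) <= C.
Proof.
  destruct Hrho_L1 as [B HB], Hu_bd as [M HM].
  exists B. intros eps Heps t Ht. split; [| now apply HB].
  destruct (HX eps Heps) as [HX_Cb [HX0 [X' [HX'_Cb [_ [HX'_der HX'_rhs]]]]]].
  destruct (Hu_Cb eps Heps) as [HU_Cb HV_Cb].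
  rewrite <- (dint_ext (fun x y => Rabs (X eps x y 0)) (fun x y => Rabs (rho0 eps x y)))
    by (intros x y; now rewrite HX0).
  apply (L1_norm_nonincreasing eps M (fun t x y => X eps x y t) (fun t x y => u eps x y t)
           (fun t x y => v eps x y t)); auto.
  - lra.
  - now apply sup_derivative_sup_continuous with X'.
  - apply sup_derivative_solves_scheme with X'; [exact HX'_der |].
    intros t' Ht' x y. rewrite HX'_rhs by exact Ht'. apply rhs_scheme_rhs.
  - intros x y. rewrite !HX0. apply Hrho_per, Heps.
Qed.
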